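(* Let $\rho$ be a smooth function on an open interval $I$ with $\rho(t)\neq0$ for all $t\in I$, and let $\mu,\sigma$ be nonzero constants. Let $U(r,y),V(r,y)$ be smooth functions on $\mathbb{R}^2$ and define, for $(x,y,t)\in\mathbb{R}^2\times I$, $$u(x,y,t)=\rho(t)^{1/3}\,U\big(\rho(t)^{1/3}x,\,y\big),\qquad v(x,y,t)=\rho(t)^{2/3}\,V\big(\rho(t)^{1/3}x,\,y\big)-\frac{\rho'(t)}{9\mu}x,$$ where $\rho^{1/3}$ denotes the real cube root. Then $(u,v)$ solves $$\rho(t)u_t+3\mu(uv)_x+\sigma u_{xxx}=0,\qquad u_x=v_y$$ if and only if $(U,V)$ solves $$3\mu(UV)_r+\sigma U_{rrr}=0,\qquad U_r-V_y=0.$$ *)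

From Stdlib Require Import Reals Lra.
From Coquelicot Require Import Coquelicot.
Open Scope R_scope.

Definition cbrt (x : R) : R :=
  if Rlt_dec 0 x then Rpower x (1/3)
  else if Rlt_dec x 0 then - Rpower (- x) (1/3) else 0.

Definition in_I (a b : Rbar) (t : R) : Prop := Rbar_lt a t /\ Rbar_lt t b.

Definition smooth_on (a b : Rbar) (f : R -> R) : Prop :=
  forall (n : nat) (t : R), in_I a b t -> ex_derive_n f n t.

Fixpoint Ck2 (n : nat) (f : R -> R -> R) : Prop :=
  match n with
  | O => forall x y : R, continuous (fun p : R * R => f (fst p) (snd p)) (x, y)
  | S m =>
      (forall x y : R, ex_derive (fun z => f z y) x /\ ex_derive (fun w => f x w) y)
      /\ Ck2 m f
      /\ Ck2 m (fun x y => Derive (fun z => f z y) x)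
      /\ Ck2 m (fun x y => Derive (fun w => f x w) y)
  end.

Definition smooth2 (f : R -> R -> R) : Prop := forall n, Ck2 n f.

(** With [c = ρ^(1/3)] we have [ρ = c^3] and [c' = ρ'/(3c^2)].  Every
    derivative of [(u,v)] is a power of [c] times the corresponding derivative
    of [(U,V)] at [r = c x], except for the terms created by the time
    dependence of [c]; the drift [-ρ' x/(9μ)] in [v] is exactly what makes its
    contribution to [3μ(uv)_x] cancel [ρ u_t].  So the first residual of
    [(u,v)] is [c^4] times that of [(U,V)] and the second is [c^2] times it.
    As [c ≠ 0], and [r = c x] sweeps [R] as [x] does, the systems are
    equivalent. *)

From Stdlib Require Import Reals Lra.
From Coquelicot Require Import Coquelicot.
Open Scope R_scope.

Lemma Rpower_third_pow3 y : 0 < y -> Rpower y (1/3) ^ 3 = y.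
Proof.
  intro Hy.
  rewrite <- Rpower_pow by (unfold Rpower; apply exp_pos).
  rewrite Rpower_mult.
  replace (1/3 * INR 3) with 1 by (simpl; field).
  now apply Rpower_1.
Qed.

Lemma cbrt_pow3 y : cbrt y ^ 3 = y.
Proof.
  unfold cbrt.
  destruct (Rlt_dec 0 y); [now apply Rpower_third_pow3|].
  destruct (Rlt_dec y 0); [|simpl; lra].
  replace ((- Rpower (- y) (1/3)) ^ 3) with (- Rpower (- y) (1/3) ^ 3) by ring.
  rewrite Rpower_third_pow3; lra.
Qed.

Lemma cbrt_neq0 y : y <> 0 -> cbrt y <> 0.
Proof. intros Hy E. apply Hy. rewrite <- (cbrt_pow3 y), E. ring. Qed.

Lemma ex_derive_cbrt y : y <> 0 -> ex_derive cbrt y.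
Proof.
  intro Hy. destruct (Rlt_dec 0 y) as [Hpos|Hnpos].
  - apply ex_derive_ext_loc with (f := fun z => exp (1/3 * ln z)).
    + apply filter_imp with (P := fun z => 0 < z); [|exact (open_gt 0 y Hpos)].
      intros z Hz. unfold cbrt. now destruct (Rlt_dec 0 z); [|lra].
    + auto_derive. exact Hpos.
  - assert (Hneg : y < 0) by lra.
    apply ex_derive_ext_loc with (f := fun z => - exp (1/3 * ln (- z))).
    + apply filter_imp with (P := fun z => z < 0); [|exact (open_lt 0 y Hneg)].
      intros z Hz. unfold cbrt.
      destruct (Rlt_dec 0 z); [lra|]. now destruct (Rlt_dec z 0); [|lra].
    + auto_derive. lra.
Qed.

Lemma is_derive_cbrt y : y <> 0 -> is_derive cbrt y (/ (3 * cbrt y ^ 2)).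
Proof.
  intro Hy.
  pose proof (ex_derive_cbrt y Hy) as Hcbrt.
  assert (Hcube : is_derive (fun z => cbrt z ^ 3) y (3 * cbrt y ^ 2 * Derive cbrt y)).
  { auto_derive; [exact Hcbrt|]. change (fun z : R => cbrt z) with cbrt. ring. }
  apply (is_derive_ext _ (fun z => z)) in Hcube; [|intro; apply cbrt_pow3].
  assert (HD : 3 * cbrt y ^ 2 * Derive cbrt y = 1)
    by (rewrite <- (is_derive_unique _ _ _ Hcube); apply Derive_id).
  replace (/ (3 * cbrt y ^ 2)) with (Derive cbrt y).
  - now apply Derive_correct.
  - field_simplify_eq; [lra | exact (cbrt_neq0 y Hy)].
Qed.

Lemma in_I_nonempty a b : Rbar_lt a b -> exists t, in_I a b t.
Proof.
  unfold in_I. destruct a as [a| |], b as [b| |]; simpl; intro H; try contradiction.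
  - exists ((a + b) / 2); simpl; lra.
  - exists (a + 1); simpl; lra.
  - exists (b - 1); simpl; lra.
  - now exists 0.
Qed.

Definition partial_x (f : R -> R -> R) : R -> R -> R :=
  fun x y => Derive (fun z => f z y) x.

Lemma Derive_n_partial_x f k x y :
  Derive_n (fun z => f z y) k x = Nat.iter k partial_x f x y.
Proof.
  revert x. induction k as [|k IH]; intro x; [reflexivity|].
  simpl. unfold partial_x at 1. now apply Derive_ext.
Qed.

Lemma smooth2_partial_x f : smooth2 f -> smooth2 (partial_x f).
Proof. intros Hf n. now destruct (Hf (S n)) as [_ [_ [Hx _]]]. Qed.

Lemma smooth2_ex_derive_x f : smooth2 f -> forall x y, ex_derive (fun z => f z y) x.
Proof. intros Hf x y. apply (proj1 (Hf 1%nat)). Qed.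

Lemma smooth2_ex_derive_y f : smooth2 f -> forall x y, ex_derive (fun w => f x w) y.
Proof. intros Hf x y. apply (proj1 (Hf 1%nat)). Qed.

Lemma smooth2_ex_derive_n_x f : smooth2 f -> forall k x y, ex_derive_n (fun z => f z y) k x.
Proof.
  intros Hf [|k] x y; [exact I|].
  apply ex_derive_ext with (f := fun z => Nat.iter k partial_x f z y).
  - intro z. symmetry. apply Derive_n_partial_x.
  - apply smooth2_ex_derive_x.
    induction k as [|k IH]; [exact Hf|]. now apply smooth2_partial_x.
Qed.

Section Scaling.

Variables (rho : R -> R) (mu : R) (U V : R -> R -> R) (t : R).
Hypotheses (rho_neq0 : rho t <> 0) (rho_derivable : ex_derive rho t)
  (mu_neq0 : mu <> 0) (U_smooth : smooth2 U) (V_smooth : smooth2 V).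

Local Notation c := (cbrt (rho t)).
Local Notation u x y s := (cbrt (rho s) * U (cbrt (rho s) * x) y).
Local Notation v x y s :=
  (cbrt (rho s) ^ 2 * V (cbrt (rho s) * x) y - Derive rho s / (9 * mu) * x).

Let c_neq0 : c <> 0 := cbrt_neq0 _ rho_neq0.

Lemma Derive_scaled_t x y :
  Derive (fun s => u x y s) t
  = Derive rho t / (3 * c ^ 2) * (U (c * x) y + c * x * Derive (fun z => U z y) (c * x)).
Proof.
  pose proof (smooth2_ex_derive_x U U_smooth (c * x) y) as HUx.
  pose proof (ex_derive_cbrt _ rho_neq0) as Hcbrt.
  apply is_derive_unique. auto_derive; [repeat split; auto|].
  change (fun s : R => cbrt s) with cbrt. change (fun s : R => rho s) with rho.
  rewrite (is_derive_unique _ _ _ (is_derive_cbrt _ rho_neq0)). field. exact c_neq0.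
Qed.

Lemma Derive_scaled_x y x :
  Derive (fun z => u z y t) x = c ^ 2 * Derive (fun z => U z y) (c * x).
Proof.
  pose proof (smooth2_ex_derive_x U U_smooth (c * x) y) as HUx.
  apply is_derive_unique. auto_derive; [auto | ring].
Qed.

Lemma Derive_n_scaled_x y n x :
  Derive_n (fun z => u z y t) n x = c * c ^ n * Derive_n (fun z => U z y) n (c * x).
Proof.
  rewrite Derive_n_scal_l, (Derive_n_comp_scal (fun z => U z y)), Rmult_assoc; [reflexivity|].
  apply filter_forall. intros. now apply smooth2_ex_derive_n_x.
Qed.

Lemma Derive_scaled_product_x y x :
  Derive (fun z => u z y t * v z y t) x
  = c ^ 4 * Derive (fun z => U z y * V z y) (c * x)
    - Derive rho t / (9 * mu) * (c ^ 2 * x * Derive (fun z => U z y) (c * x) + c * U (c * x) y).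
Proof.
  pose proof (smooth2_ex_derive_x U U_smooth (c * x) y) as HUx.
  pose proof (smooth2_ex_derive_x V V_smooth (c * x) y) as HVx.
  rewrite (Derive_mult (fun z => U z y) (fun z => V z y)) by assumption.
  apply is_derive_unique. auto_derive; [auto | field; exact mu_neq0].
Qed.

Lemma Derive_scaled_y x y :
  Derive (fun w => v x w t) y = c ^ 2 * Derive (fun w => V (c * x) w) y.
Proof.
  pose proof (smooth2_ex_derive_y V V_smooth (c * x) y) as HVy.
  apply is_derive_unique. auto_derive; [auto | ring].
Qed.

Lemma evolution_residual_scaled sigma x y :
  rho t * Derive (fun s => u x y s) t
  + 3 * mu * Derive (fun z => u z y t * v z y t) x
  + sigma * Derive_n (fun z => u z y t) 3 x
  = c ^ 4 * (3 * mu * Derive (fun z => U z y * V z y) (c * x)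
             + sigma * Derive_n (fun z => U z y) 3 (c * x)).
Proof.
  rewrite Derive_scaled_t, Derive_scaled_product_x, Derive_n_scaled_x.
  rewrite <- (cbrt_pow3 (rho t)) at 1.
  field. split; [exact mu_neq0 | exact c_neq0].
Qed.

Lemma compatibility_residual_scaled x y :
  Derive (fun z => u z y t) x - Derive (fun w => v x w t) y
  = c ^ 2 * (Derive (fun z => U z y) (c * x) - Derive (fun w => V (c * x) w) y).
Proof. rewrite Derive_scaled_x, Derive_scaled_y. ring. Qed.

End Scaling.

Theorem mainTheorem3 (a b : Rbar) (rho : R -> R) (mu sigma : R)
  (U V : R -> R -> R) :
  Rbar_lt a b ->
  smooth_on a b rho ->
  (forall t, in_I a b t -> rho t <> 0) ->
  mu <> 0 -> sigma <> 0 ->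
  smooth2 U -> smooth2 V ->
  let u := fun x y t => cbrt (rho t) * U (cbrt (rho t) * x) y in
  let v := fun x y t =>
    (cbrt (rho t)) ^ 2 * V (cbrt (rho t) * x) y - Derive rho t / (9 * mu) * x in
  (forall x y t, in_I a b t ->
      rho t * Derive (fun s => u x y s) t
      + 3 * mu * Derive (fun z => u z y t * v z y t) x
      + sigma * Derive_n (fun z => u z y t) 3 x = 0
      /\ Derive (fun z => u z y t) x = Derive (fun w => v x w t) y)
  <->
  (forall r y,
      3 * mu * Derive (fun z => U z y * V z y) r
      + sigma * Derive_n (fun z => U z y) 3 r = 0
      /\ Derive (fun z => U z y) r - Derive (fun w => V r w) y = 0).
Proof.
  intros Hab Hrho Hrho_neq0 Hmu _ HU HV. cbv zeta beta.
  pose proof (fun t (Ht : in_I a b t) => evolution_residual_scaled rho mu U V t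
    (Hrho_neq0 t Ht) (Hrho 1%nat t Ht) Hmu HU HV sigma) as Hevol.
  pose proof (fun t => compatibility_residual_scaled rho mu U V t HU HV) as Hcompat.
  split.
  - intros Hsol r y.
    destruct (in_I_nonempty a b Hab) as [t Ht].
    pose proof (cbrt_neq0 _ (Hrho_neq0 t Ht)) as Hc.
    specialize (Hevol t Ht (r / cbrt (rho t)) y). specialize (Hcompat t (r / cbrt (rho t)) y).
    destruct (Hsol (r / cbrt (rho t)) y t Ht) as [Hevol0 Hcompat0].
    rewrite Hevol0 in Hevol. rewrite Hcompat0, Rminus_diag in Hcompat.
    replace (cbrt (rho t) * (r / cbrt (rho t))) with r in Hevol, Hcompat by (field; exact Hc).
    split.
    + apply (Rmult_eq_reg_l (cbrt (rho t) ^ 4)); [|now apply pow_nonzero].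
      now rewrite <- Hevol, Rmult_0_r.
    + apply (Rmult_eq_reg_l (cbrt (rho t) ^ 2)); [|now apply pow_nonzero].
      now rewrite <- Hcompat, Rmult_0_r.
  - intros Hsol x y t Ht.
    specialize (Hevol t Ht x y). specialize (Hcompat t x y).
    destruct (Hsol (cbrt (rho t) * x) y) as [Hevol0 Hcompat0].
    rewrite Hevol0, Rmult_0_r in Hevol. rewrite Hcompat0, Rmult_0_r in Hcompat.
    split; [exact Hevol | lra].
Qed.
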